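(* Let $\beta\in\mathbb{R}$. Then $$\lim_{v\to\infty}\frac{d_H((0,1),(\beta,v))}{\sqrt v}=2,$$ and consequently $\lim_{v\to\infty}\frac{d_H((0,1),(\beta,v))}{d_H((0,1),(0,v))}=1$.
   Context: Let $\mathcal{H}=\{(x,v)\in\mathbb{R}^2:v\ge0\}$ and $d_H$ the Riemannian distance on $\mathcal{H}$ induced by the metric $ds^2=v^{-1}(dx^2+dv^2)$ on the open upper half-plane (extended to the boundary). *)

From Stdlib Require Import Reals.
From Coquelicot Require Import Coquelicot.
Open Scope R_scope.

Definition H_curve (cx cv : R -> R) (p q : R * R) : Prop :=
  (forall t, 0 <= t <= 1 ->
     ex_derive cx t /\ ex_derive cv t /\
     continuous (Derive cx) t /\ continuous (Derive cv) t /\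
     0 < cv t) /\
  cx 0 = fst p /\ cv 0 = snd p /\ cx 1 = fst q /\ cv 1 = snd q.

(* Length of a curve for the metric ds^2 = v^{-1} (dx^2 + dv^2). *)
Definition H_length (cx cv : R -> R) : R :=
  RInt (fun t => sqrt ((Derive cx t)^2 + (Derive cv t)^2) / sqrt (cv t)) 0 1.

Definition d_H (p q : R * R) : R :=
  real (Glb_Rbar (fun L => exists cx cv, H_curve cx cv p q /\ L = H_length cx cv)).

(* Every admissible curve from (x0, v0) to (x1, v1) has length at least
   2 sqrt v1 - 2 sqrt v0, because along a curve t |-> (x t, v t) the integrand
   |(x', v')| / sqrt v dominates v' / sqrt v, the derivative of 2 sqrt v.  The straight segment realises this up to an
   error bounded by the horizontal displacement, so
   |d_H((0,1),(beta,v)) - 2 sqrt v| <= 2 + 2|beta| for v > 1.  Dividing by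
   sqrt v gives the first limit; the second is the quotient of two instances
   of it. *)

From Stdlib Require Import Reals Lra.
From Coquelicot Require Import Coquelicot.
Open Scope R_scope.

Lemma real_Glb_Rbar_bounds (E : R -> Prop) (a L : R) :
  E L -> (forall x, E x -> a <= x) -> a <= real (Glb_Rbar E) <= L.
Proof.
  intros EL Ha.
  destruct (Glb_Rbar_correct E) as [Hlb Hglb].
  assert (Hup : Rbar_le (Glb_Rbar E) L) by exact (Hlb L EL).
  assert (Hlow : Rbar_le a (Glb_Rbar E)) by (apply Hglb; intros x Ex; exact (Ha x Ex)).
  destruct (Glb_Rbar E); simpl in *; tauto.
Qed.

Lemma is_lim_div_of_bounded_deviation (f g : R -> R) (a C M : R) :
  (forall x, M < x -> Rabs (f x - a * g x) <= C) ->
  is_lim g p_infty p_infty ->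
  is_lim (fun x => f x / g x) p_infty a.
Proof.
  intros Hdev Hg.
  assert (HCg : forall k, is_lim (fun x => a + k * / g x) p_infty a).
  { intros k.
    assert (H := is_lim_plus _ _ p_infty a (Rbar_mult k 0) a (is_lim_const a p_infty)
                   (is_lim_scal_l _ k _ _ (is_lim_inv _ _ _ Hg ltac:(discriminate)))).
    apply H. simpl. rewrite Rmult_0_r. unfold is_Rbar_plus. simpl. now rewrite Rplus_0_r. }
  apply (is_lim_le_le_loc (fun x => a + - C * / g x) (fun x => a + C * / g x));
    [|apply HCg|apply HCg].
  assert (Hpos : Rbar_locally p_infty (fun x => 0 < g x)) by (apply Hg; now exists 0).
  destruct Hpos as [N HN].
  exists (Rmax M N). intros x Hx.
  assert (gx : 0 < g x) by (apply HN; eapply Rle_lt_trans; eauto using Rmax_r).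
  pose proof (Rinv_0_lt_compat _ gx).
  assert (Hd : Rabs (f x - a * g x) <= C) by (apply Hdev; eapply Rle_lt_trans; eauto using Rmax_l).
  apply Rabs_le_between in Hd.
  replace (f x / g x) with (a + (f x - a * g x) * / g x) by (field; lra).
  split; apply Rplus_le_compat_l, Rmult_le_compat_r; lra.
Qed.

Lemma continuous_div_sqrt (a c : R -> R) (x : R) :
  continuous a x -> continuous c x -> 0 < c x ->
  continuous (fun t => a t / sqrt (c t)) x.
Proof.
  intros Ha Hc Hpos. apply continuity_pt_filterlim.
  apply (continuity_pt_div a (fun t => sqrt (c t))).
  - now apply continuity_pt_filterlim.
  - apply (continuity_pt_comp c sqrt).
    + now apply continuity_pt_filterlim.
    + apply continuity_pt_sqrt; lra.
  - apply Rgt_not_eq, sqrt_lt_R0; lra.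
Qed.

Lemma continuous_sqrt_sum_sq (a b : R -> R) (x : R) :
  continuous a x -> continuous b x ->
  continuous (fun t => sqrt (a t ^ 2 + b t ^ 2)) x.
Proof.
  intros Ha Hb.
  apply (continuous_comp (fun t => a t ^ 2 + b t ^ 2) sqrt).
  - apply (continuous_plus (fun t => a t ^ 2) (fun t => b t ^ 2));
      apply (continuous_comp _ (fun y => y ^ 2)); auto;
      apply continuity_pt_filterlim, derivable_continuous_pt, derivable_pt_pow.
  - apply continuity_pt_filterlim, continuity_pt_sqrt. nra.
Qed.

Section AdmissibleCurve.

Variables (cx cv : R -> R) (p q : R * R).
Hypothesis Hc : H_curve cx cv p q.

Let regular t : 0 <= t <= 1 ->
  ex_derive cv t /\ continuous (Derive cx) t /\ continuous (Derive cv) t /\ 0 < cv t.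
Proof. intros Ht. destruct Hc as [H _]. destruct (H t Ht) as (_ & ? & ? & ? & ?). auto. Qed.

Let continuous_height_integrand t : 0 <= t <= 1 ->
  continuous (fun s => Derive cv s / sqrt (cv s)) t.
Proof.
  intros Ht. destruct (regular t Ht) as (Hd & _ & Hdv & Hpos).
  apply continuous_div_sqrt; auto. exact (ex_derive_continuous cv t Hd).
Qed.

Lemma is_RInt_height_gain :
  is_RInt (fun t => Derive cv t / sqrt (cv t)) 0 1 (2 * sqrt (cv 1) - 2 * sqrt (cv 0)).
Proof.
  assert (E := is_RInt_derive (fun t => 2 * sqrt (cv t))
                 (fun t => Derive cv t / sqrt (cv t)) 0 1).
  rewrite Rmin_left, Rmax_right in E by lra.
  apply E; intros t Ht; [|exact (continuous_height_integrand t Ht)].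
  destruct (regular t Ht) as (Hd & _ & _ & Hpos).
  auto_derive; [tauto|].
  assert (0 < sqrt (cv t)) by (apply sqrt_lt_R0; lra).
  change (Derive (fun s => cv s) t) with (Derive cv t).
  field; lra.
Qed.

Lemma H_length_ge_height_gain : 2 * sqrt (cv 1) - 2 * sqrt (cv 0) <= H_length cx cv.
Proof.
  rewrite <- (is_RInt_unique _ _ _ _ is_RInt_height_gain).
  unfold H_length. apply RInt_le; [lra | | |].
  - apply (ex_RInt_continuous (V := R_CompleteNormedModule)).
    rewrite Rmin_left, Rmax_right by lra. exact continuous_height_integrand.
  - apply (ex_RInt_continuous (V := R_CompleteNormedModule)).
    rewrite Rmin_left, Rmax_right by lra. intros t Ht.
    destruct (regular t Ht) as (Hd & Hdx & Hdv & Hpos).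
    apply (continuous_div_sqrt (fun s => sqrt (Derive cx s ^ 2 + Derive cv s ^ 2))); auto.
    + now apply continuous_sqrt_sum_sq.
    + exact (ex_derive_continuous cv t Hd).
  - intros t Ht. destruct (regular t ltac:(lra)) as (_ & _ & _ & Hpos).
    apply Rmult_le_compat_r.
    + left; apply Rinv_0_lt_compat, sqrt_lt_R0; lra.
    + apply Rle_trans with (Rabs (Derive cv t)); [apply Rle_abs|].
      rewrite <- sqrt_Rsqr_abs. apply sqrt_le_1_alt. unfold Rsqr. nra.
Qed.

End AdmissibleCurve.

Definition interp (a b t : R) : R := a + (b - a) * t.

Lemma Derive_interp (a b t : R) : Derive (interp a b) t = b - a.
Proof. apply is_derive_unique. unfold interp. auto_derive; auto. ring. Qed.

Section Segment.

Variables p q : R * R.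
Hypotheses (Hp : 0 < snd p) (Hq : 0 < snd q).

Lemma interp_pos t : 0 <= t <= 1 -> 0 < interp (snd p) (snd q) t.
Proof. intros Ht. unfold interp. nra. Qed.

Lemma segment_H_curve : H_curve (interp (fst p) (fst q)) (interp (snd p) (snd q)) p q.
Proof.
  split; [|unfold interp; repeat split; ring].
  intros t Ht. repeat split.
  - unfold interp. auto_derive; auto.
  - unfold interp. auto_derive; auto.
  - apply (continuous_ext (fun _ => fst q - fst p)); [intros; now rewrite Derive_interp|].
    apply continuous_const.
  - apply (continuous_ext (fun _ => snd q - snd p)); [intros; now rewrite Derive_interp|].
    apply continuous_const.
  - now apply interp_pos.
Qed.

(* The integrand is a constant multiple of the one in [is_RInt_height_gain]. *)
Lemma H_length_segment : snd p <> snd q ->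
  H_length (interp (fst p) (fst q)) (interp (snd p) (snd q)) =
  2 * sqrt ((fst q - fst p) ^ 2 + (snd q - snd p) ^ 2) / (sqrt (snd p) + sqrt (snd q)).
Proof.
  intros Hpq.
  set (N := sqrt ((fst q - fst p) ^ 2 + (snd q - snd p) ^ 2)).
  set (K := N / (snd q - snd p)).
  assert (Hgain := is_RInt_scal _ _ _ K _ (is_RInt_height_gain _ _ _ _ segment_H_curve)).
  unfold H_length. erewrite is_RInt_unique.
  2: { eapply is_RInt_ext; [|exact Hgain]. intros t Ht.
       rewrite Rmin_left, Rmax_right in Ht by lra.
       assert (0 < sqrt (interp (snd p) (snd q) t)) by (apply sqrt_lt_R0, interp_pos; lra).
       rewrite !Derive_interp. change (scal K ?y) with (K * y). unfold K, N.
       match goal with |- ?l = ?r => change (@eq R l r) end.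
       field. split; lra. }
  change (scal K ?y) with (K * y). unfold K, interp.
  replace (snd p + (snd q - snd p) * 1) with (snd q) by ring.
  replace (snd p + (snd q - snd p) * 0) with (snd p) by ring.
  assert (Hsp : 0 < sqrt (snd p)) by (apply sqrt_lt_R0; lra).
  assert (Hsq : 0 < sqrt (snd q)) by (apply sqrt_lt_R0; lra).
  replace (snd q - snd p) with ((sqrt (snd q) - sqrt (snd p)) * (sqrt (snd q) + sqrt (snd p)))
    by (ring_simplify; rewrite !pow2_sqrt; lra).
  assert (sqrt (snd q) <> sqrt (snd p)).
  { intros E. apply Hpq. rewrite <- (pow2_sqrt (snd p)), <- (pow2_sqrt (snd q)), E; lra. }
  field. split; lra.
Qed.

Lemma d_H_bounds : snd p <> snd q ->
  2 * sqrt (snd q) - 2 * sqrt (snd p) <= d_H p q <=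
  2 * sqrt ((fst q - fst p) ^ 2 + (snd q - snd p) ^ 2) / (sqrt (snd p) + sqrt (snd q)).
Proof.
  intros Hpq. rewrite <- H_length_segment by exact Hpq.
  apply real_Glb_Rbar_bounds.
  - exists (interp (fst p) (fst q)), (interp (snd p) (snd q)). split; [exact segment_H_curve|reflexivity].
  - intros L (cx & cv & Hcurve & ->).
    pose proof (H_length_ge_height_gain _ _ _ _ Hcurve) as Hl.
    destruct Hcurve as (_ & _ & -> & _ & ->) in Hl. exact Hl.
Qed.

End Segment.

Lemma d_H_from_base_deviation (beta v : R) : 1 < v ->
  Rabs (d_H (0, 1) (beta, v) - 2 * sqrt v) <= 2 + 2 * Rabs beta.
Proof.
  intros Hv.
  destruct (d_H_bounds (0, 1) (beta, v) ltac:(simpl; lra) ltac:(simpl; lra) ltac:(simpl; lra))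
    as [Hlow Hup].
  cbn [fst snd] in Hlow, Hup. rewrite sqrt_1 in Hlow, Hup. rewrite Rminus_0_r in Hup.
  assert (Hs1 : 1 < sqrt v) by (rewrite <- sqrt_1; apply sqrt_lt_1_alt; lra).
  assert (Hss : sqrt v * sqrt v = v) by (apply sqrt_sqrt; lra).
  assert (Habs := Rabs_pos beta).
  assert (HN : sqrt (beta ^ 2 + (v - 1) ^ 2) <= Rabs beta + (v - 1)).
  { rewrite <- (sqrt_square (Rabs beta + (v - 1))) by lra.
    apply sqrt_le_1_alt. rewrite <- (pow2_abs beta). nra. }
  assert (Hseg : 2 * (Rabs beta + (v - 1)) / (1 + sqrt v) <= 2 * sqrt v - 2 + 2 * Rabs beta).
  { apply Rle_div_l; [lra|].
    assert (0 <= Rabs beta * sqrt v) by (apply Rmult_le_pos; lra).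
    assert (E : (2 * sqrt v - 2 + 2 * Rabs beta) * (1 + sqrt v) - 2 * (Rabs beta + (v - 1))
                = 2 * (Rabs beta * sqrt v) + 2 * (sqrt v * sqrt v - v)) by ring.
    lra. }
  assert (Hmono : 2 * sqrt (beta ^ 2 + (v - 1) ^ 2) / (1 + sqrt v)
                  <= 2 * (Rabs beta + (v - 1)) / (1 + sqrt v)).
  { apply Rmult_le_compat_r; [left; apply Rinv_0_lt_compat; lra | lra]. }
  apply Rabs_le. lra.
Qed.

Lemma is_lim_d_H_div_sqrt (beta : R) :
  is_lim (fun v => d_H (0, 1) (beta, v) / sqrt v) p_infty 2.
Proof.
  apply is_lim_div_of_bounded_deviation with (C := 2 + 2 * Rabs beta) (M := 1).
  - apply d_H_from_base_deviation.
  - exact (is_lim_sqrt_p _ _ (is_lim_id p_infty)).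
Qed.

Theorem lemma2p13 (beta : R) :
  is_lim (fun v => d_H (0, 1) (beta, v) / sqrt v) p_infty 2 /\
  is_lim (fun v => d_H (0, 1) (beta, v) / d_H (0, 1) (0, v)) p_infty 1.
Proof.
  split; [apply is_lim_d_H_div_sqrt|].
  assert (Hratio := is_lim_div _ _ p_infty 2 2 (is_lim_d_H_div_sqrt beta)
                      (is_lim_d_H_div_sqrt 0) ltac:(intro E; injection E; lra) I).
  simpl in Hratio. replace (2 * / 2) with 1 in Hratio by field.
  apply (is_lim_ext_loc _ _ _ _) with (2 := Hratio). exists 1. intros v Hv.
  destruct (d_H_bounds (0, 1) (0, v) ltac:(simpl; lra) ltac:(simpl; lra) ltac:(simpl; lra))
    as [Hlow _].
  cbn [fst snd] in Hlow. rewrite sqrt_1 in Hlow.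
  assert (1 < sqrt v) by (rewrite <- sqrt_1; apply sqrt_lt_1_alt; lra).
  field. split; lra.
Qed.
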